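(* Consider the system \[ \begin{aligned} \dot S_h(t)&=\beta_h-C_{vh}\frac{I_v(t)}{N_v(t)}S_h(t)-\mu_hS_h(t),\\ \dot I_h(t)&=C_{vh}\frac{I_v(t-\tau)}{N_v(t-\tau)}S_h(t-\tau)-\mu_hI_h(t),\\ \dot S_v(t)&=\beta_v-C_{hv}I_h(t)S_v(t)-\mu_vS_v(t),\\ \dot I_v(t)&=C_{hv}I_h(t)S_v(t)-\mu_vI_v(t), \end{aligned} \] with $N_v=S_v+I_v$ and positive parameters $\beta_h,\beta_v,\mu_h,\mu_v,C_{vh},C_{hv}$, on the phase space $C_+$. Let $E^0=(\beta_h/\mu_h,0,\beta_v/\mu_v,0)^T$ and $R_0=\sqrt{C_{vh}C_{hv}\beta_h/(\mu_h^2\mu_v)}$. Then for any $\tau\ge0$, $E^0$ is globally asymptotically stable in $C_+$ if $R_0<1$, and globally attractive in $C_+$ if $R_0=1$.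
   Context: $C_+=\{\varphi\in C([-\tau,0],\mathbb{R}_+^4):\varphi_3(\theta)+\varphi_4(\theta)>0\ \forall\theta\in[-\tau,0]\}$ with the sup-norm; the constant function $E^0$ is regarded as an element of $C_+$. Globally attractive means every solution with initial function in $C_+$ converges to $E^0$; globally asymptotically stable means locally (Lyapunov) stable and globally attractive. *)

From Stdlib Require Import Reals.
From Coquelicot Require Import Coquelicot.
Open Scope R_scope.

Record traj := mkTraj { Sh : R -> R; Ih : R -> R; Sv : R -> R; Iv : R -> R }.

Definition cont_on_interval (a b : R) (f : R -> R) : Prop :=
  forall t, a <= t <= b ->
    filterlim f (within (fun u => a <= u <= b) (locally t)) (locally (f t)).

Definition cont_on_from (a : R) (f : R -> R) : Prop :=
  forall t, a <= t ->
    filterlim f (within (fun u => a <= u) (locally t)) (locally (f t)).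

Definition in_Cplus (tau : R) (phi : traj) : Prop :=
  cont_on_interval (- tau) 0 (Sh phi) /\ cont_on_interval (- tau) 0 (Ih phi) /\
  cont_on_interval (- tau) 0 (Sv phi) /\ cont_on_interval (- tau) 0 (Iv phi) /\
  (forall th, - tau <= th <= 0 ->
     0 <= Sh phi th /\ 0 <= Ih phi th /\ 0 <= Sv phi th /\ 0 <= Iv phi th /\
     0 < Sv phi th + Iv phi th).

Definition is_solution (bh bv muh muv Cvh Chv tau : R) (phi x : traj) : Prop :=
  (forall th, - tau <= th <= 0 ->
     Sh x th = Sh phi th /\ Ih x th = Ih phi th /\
     Sv x th = Sv phi th /\ Iv x th = Iv phi th) /\
  cont_on_from (- tau) (Sh x) /\ cont_on_from (- tau) (Ih x) /\
  cont_on_from (- tau) (Sv x) /\ cont_on_from (- tau) (Iv x) /\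
  (forall t, 0 < t ->
     is_derive (Sh x) t
       (bh - Cvh * (Iv x t / (Sv x t + Iv x t)) * Sh x t - muh * Sh x t) /\
     is_derive (Ih x) t
       (Cvh * (Iv x (t - tau) / (Sv x (t - tau) + Iv x (t - tau))) * Sh x (t - tau)
        - muh * Ih x t) /\
     is_derive (Sv x) t (bv - Chv * Ih x t * Sv x t - muv * Sv x t) /\
     is_derive (Iv x) t (Chv * Ih x t * Sv x t - muv * Iv x t)).

Definition close_at (x : traj) (e1 e2 e3 e4 eps t : R) : Prop :=
  Rabs (Sh x t - e1) < eps /\ Rabs (Ih x t - e2) < eps /\
  Rabs (Sv x t - e3) < eps /\ Rabs (Iv x t - e4) < eps.

(* Lyapunov stability of the constant function E in C_+ (sup-norm on C). *)
Definition lyap_stable (bh bv muh muv Cvh Chv tau e1 e2 e3 e4 : R) : Prop :=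
  forall eps, 0 < eps -> exists delta, 0 < delta /\
    forall phi x, in_Cplus tau phi ->
      (forall th, - tau <= th <= 0 -> close_at phi e1 e2 e3 e4 delta th) ->
      is_solution bh bv muh muv Cvh Chv tau phi x ->
      forall t, - tau <= t -> close_at x e1 e2 e3 e4 eps t.

Definition glob_attractive (bh bv muh muv Cvh Chv tau e1 e2 e3 e4 : R) : Prop :=
  forall phi x, in_Cplus tau phi ->
    is_solution bh bv muh muv Cvh Chv tau phi x ->
    is_lim (Sh x) p_infty e1 /\ is_lim (Ih x) p_infty e2 /\
    is_lim (Sv x) p_infty e3 /\ is_lim (Iv x) p_infty e4.

Definition glob_asym_stable (bh bv muh muv Cvh Chv tau e1 e2 e3 e4 : R) : Prop :=
  lyap_stable bh bv muh muv Cvh Chv tau e1 e2 e3 e4 /\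
  glob_attractive bh bv muh muv Cvh Chv tau e1 e2 e3 e4.

From Stdlib Require Import Reals Lra Psatz List.
From Coquelicot Require Import Coquelicot.
Import ListNotations.
Open Scope R_scope.

(* Once the other components are controlled, each component obeys a linear differential
   inequality y' <= c - k y (or >=), which we compare with the linear equation; in particular
   the total vector population N_v = S_v + I_v satisfies N_v' = beta_v - mu_v N_v, so N_v
   tends to beta_v/mu_v and stays away from 0.  Nonnegativity of solutions is a first-touching
   argument for x + eps e^(L t), followed by eps -> 0.

   If eventually I_v <= u N_v, the delayed equation eventually gives
   I_h <~ C_vh u A/mu_h with A = beta_h/mu_h, and then I_v/N_v <~ a/(a + mu_v) with
   a = C_hv C_vh u A/mu_h <= u mu_v, i.e. I_v/N_v <~ u/(1+u).  Iterating from u = 1 drives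
   I_v/N_v to 0, and with it every component to its value at E^0.

   For b strictly between C_hv/mu_v and mu_h/(C_vh A), the box
   {I_h < k, I_v < b k N_v} is forward invariant for initial data close to E^0, and inside it
   every component stays within O(k) of E^0. *)

Lemma cont_on_from_mono a b f : a <= b -> cont_on_from a f -> cont_on_from b f.
Proof.
  intros hab Hf t ht P HP. destruct (Hf t ltac:(lra) P HP) as [d Hd].
  exists d. intros u hu hb. apply Hd; [exact hu|lra].
Qed.

Lemma cont_on_from_continuous a f : (forall t, continuous f t) -> cont_on_from a f.
Proof.
  intros Hf t _. apply (filterlim_filter_le_1 (F := locally t)).
  - apply filter_le_within.
  - apply Hf.
Qed.

Lemma cont_on_from_const a c : cont_on_from a (fun _ => c).
Proof. apply cont_on_from_continuous. intros t. apply continuous_const. Qed.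

Lemma cont_on_from_derivable a f : (forall t, ex_derive f t) -> cont_on_from a f.
Proof.
  intros Hf. apply cont_on_from_continuous. intros t.
  exact (@ex_derive_continuous R_AbsRing R_NormedModule f t (Hf t)).
Qed.

Lemma cont_on_from_plus a f g :
  cont_on_from a f -> cont_on_from a g -> cont_on_from a (fun u => f u + g u).
Proof.
  intros Hf Hg t ht.
  exact (filterlim_comp_2 f g Rplus (Hf t ht) (Hg t ht)
           (@filterlim_plus _ R_NormedModule (f t) (g t))).
Qed.

Lemma cont_on_from_mult a f g :
  cont_on_from a f -> cont_on_from a g -> cont_on_from a (fun u => f u * g u).
Proof.
  intros Hf Hg t ht.
  exact (filterlim_comp_2 f g Rmult (Hf t ht) (Hg t ht) (@filterlim_mult R_AbsRing (f t) (g t))).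
Qed.

Lemma cont_on_from_opp a f : cont_on_from a f -> cont_on_from a (fun u => - f u).
Proof.
  intros Hf t ht.
  exact (filterlim_comp _ _ _ f Ropp _ _ _ (Hf t ht) (@filterlim_opp _ R_NormedModule (f t))).
Qed.

Lemma cont_on_from_minus a f g :
  cont_on_from a f -> cont_on_from a g -> cont_on_from a (fun u => f u - g u).
Proof. intros Hf Hg. exact (cont_on_from_plus a f _ Hf (cont_on_from_opp a g Hg)). Qed.

Lemma Rmin_as_abs x y : Rmin x y = / 2 * (x + y - Rabs (x - y)).
Proof. unfold Rmin, Rabs. destruct Rle_dec, Rcase_abs; lra. Qed.

Lemma cont_on_from_min a f g :
  cont_on_from a f -> cont_on_from a g -> cont_on_from a (fun u => Rmin (f u) (g u)).
Proof.
  intros Hf Hg.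
  assert (Habs : cont_on_from a (fun u => Rabs (f u - g u))).
  { intros t ht. exact (filterlim_comp _ _ _ _ Rabs _ _ _ (cont_on_from_minus a f g Hf Hg t ht)
                          (continuous_Rabs _)). }
  assert (H : cont_on_from a (fun u => / 2 * (f u + g u - Rabs (f u - g u)))).
  { apply cont_on_from_mult; [apply cont_on_from_const|].
    apply cont_on_from_minus; [apply cont_on_from_plus|]; assumption. }
  intros t ht. rewrite Rmin_as_abs. eapply filterlim_ext; [|apply H; exact ht].
  intros u. symmetry. apply Rmin_as_abs.
Qed.

Lemma cont_on_from_near a f t P :
  cont_on_from a f -> a <= t -> locally (f t) P ->
  exists d : posreal, forall u, a <= u -> Rabs (u - t) < d -> P (f u).
Proof.
  intros Hf ht HP. destruct (Hf t ht P HP) as [d Hd].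
  exists d. intros u hu hut. exact (Hd u hut hu).
Qed.

Lemma cont_on_from_bounded a b f :
  cont_on_from a f -> exists K, 0 <= K /\ forall t, a <= t <= b -> Rabs (f t) <= K.
Proof.
  intros Hf. destruct (Rle_dec a b) as [hab|hab]; [|exists 0; split; [lra|intros; lra]].
  set (F := fun u => f (Rmax a u)).
  assert (HF : forall c, continuity_pt F c).
  { intros c eps heps.
    destruct (cont_on_from_near a f (Rmax a c) (fun y => Rabs (y - f (Rmax a c)) < eps) Hf
                (Rmax_l a c)) as [d Hd].
    { exists (mkposreal eps heps). intros y Hy. exact Hy. }
    exists d. split; [apply cond_pos|]. intros u [_ hu]. simpl in hu |- *. unfold R_dist in *.
    apply Hd; [apply Rmax_l|].
    unfold Rmax; destruct Rle_dec, Rle_dec; unfold Rabs in *; repeat destruct Rcase_abs; lra. }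
  destruct (continuity_ab_maj F a b hab (fun c _ => HF c)) as [M [HM _]].
  destruct (continuity_ab_min F a b hab (fun c _ => HF c)) as [m [Hm _]].
  pose proof (Rle_abs (F M)). pose proof (Rle_abs (- F m)). rewrite Rabs_Ropp in *.
  pose proof (Rabs_pos (F M)). pose proof (Rabs_pos (F m)).
  exists (Rabs (F M) + Rabs (F m)). split; [lra|].
  intros t ht. specialize (HM t ht). specialize (Hm t ht).
  assert (E : F t = f t) by (unfold F; rewrite Rmax_right by lra; reflexivity).
  rewrite E in HM, Hm. apply Rabs_le_between. split; lra.
Qed.

Lemma first_zero a t g :
  cont_on_from a g -> 0 < g a -> a <= t -> g t <= 0 ->
  exists s, a < s <= t /\ g s = 0 /\ forall u, a <= u < s -> 0 < g u.
Proof.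
  intros Hg hga hat hgt.
  set (E := fun u => a <= u <= t /\ forall v, a <= v <= u -> 0 < g v).
  assert (Ea : E a) by (split; [lra|intros v hv; replace v with a by lra; exact hga]).
  destruct (completeness E) as [s [Hub Hlub]]; [exists t; intros u [hu _]; lra|now exists a|].
  assert (has : a <= s) by (apply Hub, Ea).
  assert (hst : s <= t) by (apply Hlub; intros u [hu _]; lra).
  assert (before : forall u, a <= u < s -> 0 < g u).
  { intros u hu. apply Rnot_le_lt. intros hgu. assert (s <= u); [|lra].
    apply Hlub. intros w [hw Hw]. apply Rnot_lt_le. intros huw. specialize (Hw u ltac:(lra)). lra. }
  assert (extend : 0 < g s -> s < t -> False).
  { intros hgs hs.
    destruct (cont_on_from_near a g s (fun y => 0 < y) Hg has (open_gt 0 _ hgs)) as [d Hd].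
    pose proof (cond_pos d).
    set (u := s + Rmin (d / 2) ((t - s) / 2)).
    assert (hu : s < u <= t /\ u - s < d).
    { pose proof (Rmin_l (d / 2) ((t - s) / 2)). pose proof (Rmin_r (d / 2) ((t - s) / 2)).
      assert (0 < Rmin (d / 2) ((t - s) / 2)) by (apply Rmin_pos; lra). unfold u. lra. }
    assert (Eu : E u).
    { split; [lra|]. intros v hv. destruct (Rlt_dec v s); [apply before; lra|].
      apply Hd; [lra|]. rewrite Rabs_pos_eq; lra. }
    specialize (Hub u Eu). lra. }
  assert (has' : a < s).
  { destruct (Req_dec s a) as [e|]; [|lra]. subst s.
    destruct (Req_dec a t); [subst; lra|]. exfalso. apply (extend hga). lra. }
  assert (hgs_le : g s <= 0).
  { apply Rnot_lt_le. intros hgs. destruct (Req_dec s t); [subst; lra|]. apply (extend hgs). lra. }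
  assert (hgs_ge : 0 <= g s).
  { apply Rnot_lt_le. intros hgs.
    destruct (cont_on_from_near a g s (fun y => y < 0) Hg has (open_lt 0 _ hgs)) as [d Hd].
    pose proof (cond_pos d).
    set (v := Rmax a (s - d / 2)).
    assert (hv : a <= v < s /\ s - v < d) by (unfold v, Rmax; destruct Rle_dec; lra).
    pose proof (before v (proj1 hv)). assert (g v < 0); [|lra].
    apply Hd; [lra|]. rewrite Rabs_left1; lra. }
  exists s. repeat split; try lra. exact before.
Qed.

Lemma lt_left_of_is_derive_pos g s d a :
  is_derive g s d -> 0 < d -> a < s -> exists u, a <= u < s /\ g u < g s.
Proof.
  intros Hd hd has. apply is_derive_Reals in Hd. destruct (Hd d hd) as [del Hdel].
  pose proof (cond_pos del).
  set (h := - Rmin (del / 2) (s - a)).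
  assert (hpos : 0 < Rmin (del / 2) (s - a)) by (apply Rmin_pos; lra).
  assert (hh : h < 0 /\ - h <= s - a /\ - h < del).
  { pose proof (Rmin_l (del / 2) (s - a)). pose proof (Rmin_r (del / 2) (s - a)). unfold h. lra. }
  specialize (Hdel h ltac:(lra) ltac:(rewrite Rabs_left; lra)).
  exists (s + h). split; [lra|].
  assert (q : 0 < (g (s + h) - g s) / h) by (apply Rabs_def2 in Hdel; lra).
  assert (g (s + h) - g s = (g (s + h) - g s) / h * h) by (field; lra).
  nra.
Qed.

Lemma exp_le_mono x y : x <= y -> exp x <= exp y.
Proof. intros [hlt|heq]; [left; apply exp_increasing, hlt|right; rewrite heq; reflexivity]. Qed.

Definition lmin (gs : list (R -> R)) (u : R) : R := fold_right (fun g m => Rmin (g u) m) 1 gs.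

Lemma lmin_le gs g u : In g gs -> lmin gs u <= g u.
Proof.
  induction gs as [|h gs IH]; simpl; [easy|]. intros [<-|Hg].
  - apply Rmin_l.
  - eapply Rle_trans; [apply Rmin_r|]. apply IH, Hg.
Qed.

Lemma lmin_pos gs u : (forall g, In g gs -> 0 < g u) -> 0 < lmin gs u.
Proof.
  induction gs as [|h gs IH]; simpl; intros Hpos; [lra|].
  apply Rmin_pos; [apply Hpos; now left|]. apply IH. intros g Hg. apply Hpos. now right.
Qed.

Lemma lmin_zero gs u : lmin gs u = 0 -> exists g, In g gs /\ g u = 0.
Proof.
  induction gs as [|h gs IH]; simpl; [lra|]. unfold Rmin. destruct Rle_dec; intros Hz.
  - exists h. split; [now left|exact Hz].
  - destruct (IH Hz) as [g [Hg Hgz]]. exists g. split; [now right|exact Hgz].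
Qed.

Lemma cont_on_from_lmin a gs :
  (forall g, In g gs -> cont_on_from a g) -> cont_on_from a (lmin gs).
Proof.
  induction gs as [|h gs IH]; simpl; intros Hc; [apply cont_on_from_const|].
  apply cont_on_from_min; [apply Hc; now left|]. apply IH. intros g Hg. apply Hc. now right.
Qed.

Lemma positive_barrier a b (gs : list (R -> R)) :
  (forall g, In g gs -> cont_on_from a g) ->
  (forall g, In g gs -> 0 < g a) ->
  (forall s, a < s <= b -> (forall g u, In g gs -> a <= u <= s -> 0 <= g u) ->
     forall g, In g gs -> g s = 0 -> exists d, is_derive g s d /\ 0 < d) ->
  forall g t, In g gs -> a <= t <= b -> 0 < g t.
Proof.
  intros Hc Ha Hd g t Hg ht. apply Rnot_le_lt. intros hle.
  destruct (first_zero a t (lmin gs)) as (s & hs & hz & hpos).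
  - apply cont_on_from_lmin, Hc.
  - apply lmin_pos, Ha.
  - lra.
  - pose proof (lmin_le gs g t Hg). lra.
  - assert (before : forall h u, In h gs -> a <= u < s -> 0 < h u).
    { intros h u Hh hu. pose proof (lmin_le gs h u Hh). pose proof (hpos u hu). lra. }
    assert (upto : forall h u, In h gs -> a <= u <= s -> 0 <= h u).
    { intros h u Hh hu. destruct (Req_dec u s) as [->|].
      - rewrite <- hz. apply lmin_le, Hh.
      - left. apply before; [exact Hh|lra]. }
    destruct (lmin_zero gs s hz) as (h & Hh & hh0).
    destruct (Hd s ltac:(lra) upto h Hh hh0) as (d & Hder & hd).
    destruct (lt_left_of_is_derive_pos h s d a Hder hd ltac:(lra)) as (u & hu & hlt).
    pose proof (before h u Hh hu). lra.
Qed.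

(* Apply [positive_barrier] to [g u + eps * exp (L * (u - a))], then let [eps] go to [0]. *)
Lemma nonneg_barrier a b L (gs : list (R -> R)) :
  0 <= L ->
  (forall g, In g gs -> cont_on_from a g) ->
  (forall g, In g gs -> 0 <= g a) ->
  (forall s e, a < s <= b -> 0 < e -> (forall g u, In g gs -> a <= u <= s -> - e <= g u) ->
     forall g, In g gs -> g s = - e -> exists d, is_derive g s d /\ - (L * e) < d) ->
  forall g t, In g gs -> a <= t <= b -> 0 <= g t.
Proof.
  intros hL Hc Ha Hd g t Hg ht. apply Rnot_lt_le. intros hneg.
  set (eps := - g t / (2 * exp (L * (t - a)))).
  assert (hexp := exp_pos (L * (t - a))).
  assert (heps : 0 < eps) by (unfold eps; apply Rdiv_lt_0_compat; lra).
  set (lift := fun (h : R -> R) u => h u + eps * exp (L * (u - a))).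
  assert (Hlift : 0 < lift g t).
  { apply (positive_barrier a b (map lift gs)); [| | |apply in_map, Hg|exact ht].
    - intros h' Hh'. apply in_map_iff in Hh' as (h & <- & Hh).
      apply cont_on_from_plus; [apply Hc, Hh|].
      apply cont_on_from_derivable. intros u. auto_derive. easy.
    - intros h' Hh'. apply in_map_iff in Hh' as (h & <- & Hh). unfold lift.
      rewrite Rminus_diag, Rmult_0_r, exp_0. pose proof (Ha h Hh). lra.
    - intros s hs Hnn h' Hh' hz. apply in_map_iff in Hh' as (h & <- & Hh). unfold lift in hz.
      set (e := eps * exp (L * (s - a))).
      assert (he : 0 < e) by (apply Rmult_lt_0_compat; [lra|apply exp_pos]).
      destruct (Hd s e hs he) with (g := h) as (d & Hder & hd); [|exact Hh|unfold e; lra|].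
      + intros k u Hk hu. specialize (Hnn (lift k) u (in_map lift gs k Hk) hu).
        unfold lift in Hnn. assert (eps * exp (L * (u - a)) <= e); [|lra].
        apply Rmult_le_compat_l; [lra|]. apply exp_le_mono. nra.
      + exists (d + eps * (L * exp (L * (s - a)))). split.
        * apply (is_derive_plus h (fun u => eps * exp (L * (u - a)))); [exact Hder|].
          auto_derive; [easy|]. rewrite Rmult_1_r. reflexivity.
        * unfold e in hd. lra. }
  unfold lift, eps in Hlift.
  assert (- g t / (2 * exp (L * (t - a))) * exp (L * (t - a)) = - g t / 2) by (field; lra).
  lra.
Qed.

Definition derive_le (f : R -> R) (t b : R) : Prop := exists d, is_derive f t d /\ d <= b.

Definition derive_ge (f : R -> R) (t b : R) : Prop := exists d, is_derive f t d /\ b <= d.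

Lemma derive_ge_opp f t b : derive_ge f t b -> derive_le (fun u => - f u) t (- b).
Proof. intros (d & Hd & hd). exists (- d). split; [apply (is_derive_opp f t d Hd)|lra]. Qed.

Lemma cont_on_from_nonincreasing a f :
  cont_on_from a f -> (forall t, a < t -> derive_le f t 0) ->
  forall s t, a <= s <= t -> f t <= f s.
Proof.
  intros Hf Hd.
  assert (Derive_le : forall t, a < t -> is_derive f t (Derive f t) /\ Derive f t <= 0).
  { intros t ht. destruct (Hd t ht) as (d & Hder & hd).
    rewrite (is_derive_unique f t d Hder). now split. }
  assert (interior : forall s t, a < s <= t -> f t <= f s).
  { intros s t hst. destruct (MVT_gen f s t (Derive f)) as (c & hc & Hc);
      rewrite Rmin_left, Rmax_right in * by lra.
    - intros u hu. apply Derive_le. lra.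
    - intros u hu. apply continuity_pt_filterlim, (@ex_derive_continuous R_AbsRing R_NormedModule).
      exists (Derive f u). apply Derive_le. lra.
    - destruct (Derive_le c ltac:(lra)) as [_ hc0]. nra. }
  intros s t hst. destruct (Rlt_le_dec a s) as [has|hsa]; [apply interior; lra|].
  replace s with a in * by lra. apply Rnot_lt_le. intros hlt.
  destruct (cont_on_from_near a f a (fun y => y < f t) Hf ltac:(lra) (open_lt _ _ hlt))
    as [d Hnear].
  pose proof (cond_pos d).
  assert (hat : a < t) by (destruct (Req_dec a t) as [<-|]; lra).
  set (u := a + Rmin (d / 2) (t - a)).
  assert (hu : a < u <= t /\ u - a < d).
  { pose proof (Rmin_l (d / 2) (t - a)). pose proof (Rmin_r (d / 2) (t - a)).
    assert (0 < Rmin (d / 2) (t - a)) by (apply Rmin_pos; lra). unfold u. lra. }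
  assert (f u < f t) by (apply Hnear; [lra|]; rewrite Rabs_pos_eq; lra).
  pose proof (interior u t (proj1 hu)). lra.
Qed.

(* Variation of constants: [u |-> (f u - c / k) * exp (k * (u - a))] is nonincreasing. *)
Lemma linear_upper_bound a f c k :
  k <> 0 -> cont_on_from a f -> (forall t, a < t -> derive_le f t (c - k * f t)) ->
  forall t, a <= t -> f t <= c / k + (f a - c / k) * exp (- k * (t - a)).
Proof.
  intros hk Hf Hd t ht.
  set (g := fun u => (f u - c / k) * exp (k * (u - a))).
  assert (Hg : g t <= g a).
  { apply (cont_on_from_nonincreasing a); [| |lra].
    - apply cont_on_from_mult.
      + apply cont_on_from_minus; [exact Hf|apply cont_on_from_const].
      + apply cont_on_from_derivable. intros u. auto_derive. easy.
    - intros u hu. destruct (Hd u hu) as (d & Hder & hd).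
      exists ((d - 0) * exp (k * (u - a)) + (f u - c / k) * (k * exp (k * (u - a)))). split.
      + apply (is_derive_mult (fun u => f u - c / k) (fun u => exp (k * (u - a)))).
        * exact (is_derive_minus f (fun _ => c / k) u d 0 Hder
                   (@is_derive_const R_AbsRing R_NormedModule (c / k) u)).
        * auto_derive; [easy|]. rewrite Rmult_1_r. reflexivity.
        * intros; apply Rmult_comm.
      + assert (E : (d - 0) * exp (k * (u - a)) + (f u - c / k) * (k * exp (k * (u - a)))
                    = (d - (c - k * f u)) * exp (k * (u - a))) by (field; exact hk).
        rewrite E. pose proof (exp_pos (k * (u - a))). nra. }
  unfold g in Hg. rewrite Rminus_diag, Rmult_0_r, exp_0, Rmult_1_r in Hg.
  assert (E : exp (k * (t - a)) * exp (- k * (t - a)) = 1).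
  { rewrite <- exp_plus. replace (k * (t - a) + - k * (t - a)) with 0 by ring. apply exp_0. }
  pose proof (exp_pos (- k * (t - a))).
  replace (f t) with (c / k + (f t - c / k) * exp (k * (t - a)) * exp (- k * (t - a)))
    by (rewrite Rmult_assoc, E; ring).
  apply Rplus_le_compat_l, Rmult_le_compat_r; lra.
Qed.

Lemma linear_lower_bound a f c k :
  k <> 0 -> cont_on_from a f -> (forall t, a < t -> derive_ge f t (c - k * f t)) ->
  forall t, a <= t -> c / k + (f a - c / k) * exp (- k * (t - a)) <= f t.
Proof.
  intros hk Hf Hd t ht.
  assert (H := linear_upper_bound a (fun u => - f u) (- c) k hk (cont_on_from_opp a f Hf)).
  replace (- c / k) with (- (c / k)) in H by (field; exact hk).
  enough (- f t <= - (c / k) + (- f a - - (c / k)) * exp (- k * (t - a))) by lra.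
  apply H; [|exact ht]. intros u hu.
  replace (- c - k * - f u) with (- (c - k * f u)) by ring. apply derive_ge_opp, Hd, hu.
Qed.

Lemma exp_decay_le_1 k s : 0 <= k -> 0 <= s -> 0 < exp (- k * s) <= 1.
Proof. intros hk hs. split; [apply exp_pos|]. rewrite <- exp_0. apply exp_le_mono. nra. Qed.

Lemma linear_upper_bound_max a f c k :
  0 < k -> cont_on_from a f -> (forall t, a < t -> derive_le f t (c - k * f t)) ->
  forall t, a <= t -> f t <= Rmax (f a) (c / k).
Proof.
  intros hk Hf Hd t ht. pose proof (linear_upper_bound a f c k ltac:(lra) Hf Hd t ht).
  pose proof (exp_decay_le_1 k (t - a) ltac:(lra) ltac:(lra)).
  unfold Rmax; destruct Rle_dec; nra.
Qed.

Lemma linear_lower_bound_min a f c k :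
  0 < k -> cont_on_from a f -> (forall t, a < t -> derive_ge f t (c - k * f t)) ->
  forall t, a <= t -> Rmin (f a) (c / k) <= f t.
Proof.
  intros hk Hf Hd t ht. pose proof (linear_lower_bound a f c k ltac:(lra) Hf Hd t ht).
  pose proof (exp_decay_le_1 k (t - a) ltac:(lra) ltac:(lra)).
  unfold Rmin; destruct Rle_dec; nra.
Qed.

Local Notation at_infty := (Rbar_locally p_infty).

Lemma eventually_gt a : at_infty (fun t => a < t).
Proof. exists a. easy. Qed.

Lemma eventually_shift tau P : at_infty P -> at_infty (fun t => P (t - tau)).
Proof. intros [M HM]. exists (M + tau). intros t ht. apply HM. lra. Qed.

Lemma eventually_exp_decay_le a k D eta :
  0 < k -> 0 < eta -> at_infty (fun t => D * exp (- k * (t - a)) <= eta).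
Proof.
  intros hk heta. exists (a + Rabs D / (k * eta)). intros t ht.
  assert (hD : Rabs D < eta * (k * (t - a))).
  { replace (Rabs D) with (eta * (k * (Rabs D / (k * eta)))) at 1 by (field; lra).
    apply Rmult_lt_compat_l; [lra|]. apply Rmult_lt_compat_l; lra. }
  assert (E : exp (- k * (t - a)) = / exp (k * (t - a))) by (rewrite <- exp_Ropp; f_equal; ring).
  pose proof (exp_ineq1_le (k * (t - a))). pose proof (exp_pos (k * (t - a))).
  pose proof (Rle_abs D).
  rewrite E. apply (Rmult_le_reg_r (exp (k * (t - a)))); [lra|].
  rewrite Rmult_assoc, Rinv_l by lra. nra.
Qed.

Lemma eventually_le_of_derive_le b f c k :
  0 < k -> cont_on_from b f -> at_infty (fun t => derive_le f t (c - k * f t)) ->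
  forall eta, 0 < eta -> at_infty (fun t => f t <= c / k + eta).
Proof.
  intros hk Hf [M HM] eta heta.
  pose proof (Rmax_l b M). pose proof (Rmax_r b M).
  set (a := Rmax b M) in *.
  assert (Ha : cont_on_from a f) by (apply (cont_on_from_mono b); assumption).
  assert (Hd : forall t, a < t -> derive_le f t (c - k * f t)) by (intros t ht; apply HM; lra).
  generalize (filter_and _ _ (eventually_gt a)
                (eventually_exp_decay_le a k (f a - c / k) eta hk heta)).
  apply filter_imp. intros t [ht Hsmall].
  pose proof (linear_upper_bound a f c k ltac:(lra) Ha Hd t ltac:(lra)). lra.
Qed.

Lemma eventually_ge_of_derive_ge b f c k :
  0 < k -> cont_on_from b f -> at_infty (fun t => derive_ge f t (c - k * f t)) ->
  forall eta, 0 < eta -> at_infty (fun t => c / k - eta <= f t).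
Proof.
  intros hk Hf Hd eta heta.
  assert (Hd' : at_infty (fun t => derive_le (fun u => - f u) t (- c - k * - f t))).
  { revert Hd. apply filter_imp. intros t Ht.
    replace (- c - k * - f t) with (- (c - k * f t)) by ring. apply derive_ge_opp, Ht. }
  generalize (eventually_le_of_derive_le b _ _ k hk (cont_on_from_opp b f Hf) Hd' eta heta).
  apply filter_imp. intros t ht. replace (- c / k) with (- (c / k)) in ht by (field; lra). lra.
Qed.

Lemma continuity_pt_right_near f eps :
  continuity_pt f 0 -> 0 < eps ->
  exists d, 0 < d /\ forall h, 0 < h <= d -> Rabs (f h - f 0) < eps.
Proof.
  intros Hf heps. destruct (Hf eps heps) as (al & hal & Hal).
  exists (al / 2). split; [lra|]. intros h hh. apply (Hal h). split.
  - split; [exact I|lra].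
  - simpl. unfold R_dist. rewrite Rminus_0_r, Rabs_pos_eq; lra.
Qed.

Lemma continuity_pt_right_lt f y :
  continuity_pt f 0 -> f 0 < y -> exists d, 0 < d /\ forall h, 0 < h <= d -> f h < y.
Proof.
  intros Hf hy. destruct (continuity_pt_right_near f (y - f 0) Hf ltac:(lra)) as (d & hd & Hd).
  exists d. split; [exact hd|]. intros h hh. specialize (Hd h hh). apply Rabs_def2 in Hd. lra.
Qed.

Lemma is_lim_of_eventual_bounds f l lo hi :
  continuity_pt lo 0 -> continuity_pt hi 0 -> lo 0 = l -> hi 0 = l ->
  (forall eta, 0 < eta -> at_infty (fun t => lo eta <= f t <= hi eta)) ->
  is_lim f p_infty l.
Proof.
  intros Hlo Hhi hlo hhi Hb P [eps HP].
  destruct (continuity_pt_right_near lo eps Hlo (cond_pos eps)) as (d1 & hd1 & H1).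
  destruct (continuity_pt_right_near hi eps Hhi (cond_pos eps)) as (d2 & hd2 & H2).
  set (eta := Rmin d1 d2).
  assert (heta : 0 < eta) by (apply Rmin_pos; lra).
  specialize (H1 eta ltac:(split; [lra|apply Rmin_l])).
  specialize (H2 eta ltac:(split; [lra|apply Rmin_r])).
  rewrite hlo in H1. rewrite hhi in H2. apply Rabs_def2 in H1, H2.
  change (at_infty (fun t => P (f t))).
  generalize (Hb eta heta). apply filter_imp. intros t ht. apply HP.
  unfold ball; simpl; unfold AbsRing_ball, abs, minus, plus, opp; simpl.
  apply Rabs_def1; lra.
Qed.

Lemma ratio_le v N c : 0 < N -> v <= c * N -> v / N <= c.
Proof. intros hN hv. apply (Rmult_le_reg_r N); [exact hN|]. field_simplify; lra. Qed.

Lemma ratio_ge_neg v N P m : - P <= v -> 0 <= P -> 0 < m <= N -> - (P / m) <= v / N.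
Proof.
  intros hv hP hm.
  assert (P / m * m = P) by (field; lra).
  assert (v / N * N = v) by (field; lra).
  assert (0 <= P / m) by (apply Rdiv_le_0_compat; lra).
  nra.
Qed.

Lemma mult_ge_neg p q e K :
  0 <= K -> 0 <= e -> - e <= p <= K -> - e <= q <= K -> - (K * e) <= p * q.
Proof. intros hK he hp hq. destruct (Rle_dec 0 p), (Rle_dec 0 q); nra. Qed.

Lemma div_add_ge_first_order p q c :
  0 < p -> 0 < q -> 0 <= c -> p / q - p / q * c / q <= p / (q + c).
Proof.
  intros hp hq hc.
  assert (E : p / (q + c) - (p / q - p / q * c / q) = p * c ^ 2 / ((q + c) * q ^ 2))
    by (field; lra).
  assert (0 <= p * c ^ 2 / ((q + c) * q ^ 2)).
  { apply Rdiv_le_0_compat; [apply Rmult_le_pos; [lra|apply pow2_ge_0]|].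
    apply Rmult_lt_0_compat; [lra|apply pow_lt; lra]. }
  lra.
Qed.

Lemma close_at_mono x e1 e2 e3 e4 eps eps' t :
  eps <= eps' -> close_at x e1 e2 e3 e4 eps t -> close_at x e1 e2 e3 e4 eps' t.
Proof. intros he (h1 & h2 & h3 & h4). repeat split; lra. Qed.

Lemma sqrt_ratio_lt_1 p q : 0 <= p -> 0 < q -> sqrt (p / q) < 1 -> p < q.
Proof.
  intros hp hq hs. assert (hpq : 0 <= p / q) by (apply Rdiv_le_0_compat; lra).
  pose proof (sqrt_sqrt _ hpq). pose proof (sqrt_pos (p / q)).
  assert (p / q < 1) by nra.
  replace p with (p / q * q) by (field; lra). nra.
Qed.

Lemma sqrt_ratio_eq_1 p q : 0 <= p -> 0 < q -> sqrt (p / q) = 1 -> p = q.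
Proof.
  intros hp hq hs. assert (hpq : 0 <= p / q) by (apply Rdiv_le_0_compat; lra).
  pose proof (sqrt_sqrt _ hpq) as E. rewrite hs, Rmult_1_l in E.
  replace p with (p / q * q) by (field; lra). rewrite <- E. ring.
Qed.
Definition Nv (x : traj) (t : R) : R := Sv x t + Iv x t.

Section Model.

Variables bh bv muh muv Cvh Chv tau : R.
Hypotheses (hbh : 0 < bh) (hbv : 0 < bv) (hmuh : 0 < muh) (hmuv : 0 < muv)
  (hCvh : 0 < Cvh) (hChv : 0 < Chv) (htau : 0 <= tau).

Local Notation A := (bh / muh).
Local Notation V := (bv / muv).

(* At [d = 0] the margin is [u' - a / (a + mu_v) > 0] (times [V]), where
   [a = C_hv C_vh u A / mu_h <= u mu_v] because [R0 <= 1]. *)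
Lemma ratio_improve_margin u u' :
  Cvh * Chv * bh <= muh ^ 2 * muv -> 0 <= u -> u / (1 + u) < u' ->
  exists d U, 0 < d <= V / 2 /\ U = Cvh * u * (A + d) / muh + d /\ 0 <= U /\
    Chv * U * (V + d) / (Chv * U + muv) + d < u' * (V - d).
Proof.
  intros hR0 hu hu'.
  assert (hV : 0 < V) by (apply Rdiv_lt_0_compat; lra).
  assert (hA : 0 < A) by (apply Rdiv_lt_0_compat; lra).
  set (U := fun d => Cvh * u * (A + d) / muh + d).
  assert (hU : forall d, 0 <= d -> 0 <= U d).
  { intros d hd. unfold U. apply Rplus_le_le_0_compat; [|lra].
    apply Rdiv_le_0_compat; [|lra]. apply Rmult_le_pos; nra. }
  set (Psi := fun d => Chv * U d * (V + d) / (Chv * U d + muv) + d - u' * (V - d)).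
  assert (hU0 : 0 <= Chv * U 0) by (pose proof (hU 0 (Rle_refl 0)); nra).
  assert (Psi0 : Psi 0 < 0).
  { assert (ha0 : Chv * U 0 <= u * muv).
    { unfold U. rewrite !Rplus_0_r.
      replace (Chv * (Cvh * u * (bh / muh) / muh)) with (u * (Cvh * Chv * bh / muh ^ 2))
        by (field; lra).
      apply Rmult_le_compat_l; [exact hu|]. apply ratio_le; [nra|lra]. }
    assert (Chv * U 0 / (Chv * U 0 + muv) <= u / (1 + u)).
    { apply ratio_le; [lra|].
      replace (u / (1 + u) * (Chv * U 0 + muv))
        with (Chv * U 0 + (u * muv - Chv * U 0) / (1 + u)) by (field; lra).
      assert (0 <= (u * muv - Chv * U 0) / (1 + u)) by (apply Rdiv_le_0_compat; lra). lra. }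
    unfold Psi. rewrite Rplus_0_r, Rminus_0_r, Rplus_0_r.
    replace (Chv * U 0 * V / (Chv * U 0 + muv)) with (Chv * U 0 / (Chv * U 0 + muv) * V)
      by (field; lra).
    nra. }
  assert (HPsi : continuity_pt Psi 0).
  { unfold Psi, U. reg.
    replace (Chv * (Cvh * u * (A + 0) * / muh + 0)) with (Chv * U 0) by (unfold U, Rdiv; ring).
    lra. }
  destruct (continuity_pt_right_lt Psi 0 HPsi Psi0) as (d1 & hd1 & Hd1).
  set (d := Rmin d1 (V / 2)).
  assert (hd : 0 < d <= V / 2) by (split; [apply Rmin_pos; lra|apply Rmin_r]).
  exists d, (U d). repeat split; try lra; [apply hU; lra|].
  specialize (Hd1 d ltac:(split; [lra|apply Rmin_l])). unfold Psi in Hd1. lra.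
Qed.

Section Solution.

Variables phi x : traj.
Hypotheses (Hphi : in_Cplus tau phi) (Hsol : is_solution bh bv muh muv Cvh Chv tau phi x).

Lemma solution_initial th :
  - tau <= th <= 0 ->
  0 <= Sh x th /\ 0 <= Ih x th /\ 0 <= Sv x th /\ 0 <= Iv x th /\ 0 < Nv x th.
Proof.
  intros hth. destruct Hphi as (_ & _ & _ & _ & Hpos). destruct Hsol as [Hinit _].
  destruct (Hinit th hth) as (e1 & e2 & e3 & e4). unfold Nv. rewrite e1, e2, e3, e4.
  apply Hpos, hth.
Qed.

Lemma cont_Sh a : - tau <= a -> cont_on_from a (Sh x).
Proof. intros ha. apply (cont_on_from_mono (- tau) a _ ha). apply Hsol. Qed.

Lemma cont_Ih a : - tau <= a -> cont_on_from a (Ih x).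
Proof. intros ha. apply (cont_on_from_mono (- tau) a _ ha). apply Hsol. Qed.

Lemma cont_Sv a : - tau <= a -> cont_on_from a (Sv x).
Proof. intros ha. apply (cont_on_from_mono (- tau) a _ ha). apply Hsol. Qed.

Lemma cont_Iv a : - tau <= a -> cont_on_from a (Iv x).
Proof. intros ha. apply (cont_on_from_mono (- tau) a _ ha). apply Hsol. Qed.

Lemma cont_Nv a : - tau <= a -> cont_on_from a (Nv x).
Proof. intros ha. apply cont_on_from_plus; [apply cont_Sv | apply cont_Iv]; exact ha. Qed.

Lemma derive_Sh t : 0 < t ->
  is_derive (Sh x) t (bh - Cvh * (Iv x t / Nv x t) * Sh x t - muh * Sh x t).
Proof. intros ht. apply Hsol, ht. Qed.

Lemma derive_Ih t : 0 < t ->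
  is_derive (Ih x) t
    (Cvh * (Iv x (t - tau) / Nv x (t - tau)) * Sh x (t - tau) - muh * Ih x t).
Proof. intros ht. apply Hsol, ht. Qed.

Lemma derive_Sv t : 0 < t -> is_derive (Sv x) t (bv - Chv * Ih x t * Sv x t - muv * Sv x t).
Proof. intros ht. apply Hsol, ht. Qed.

Lemma derive_Iv t : 0 < t -> is_derive (Iv x) t (Chv * Ih x t * Sv x t - muv * Iv x t).
Proof. intros ht. apply Hsol, ht. Qed.

Lemma derive_Nv t : 0 < t -> is_derive (Nv x) t (bv - muv * Nv x t).
Proof.
  intros ht. replace (bv - muv * Nv x t)
    with (plus (bv - Chv * Ih x t * Sv x t - muv * Sv x t) (Chv * Ih x t * Sv x t - muv * Iv x t))
    by (unfold plus, Nv; simpl; ring).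
  exact (is_derive_plus (Sv x) (Iv x) t _ _ (derive_Sv t ht) (derive_Iv t ht)).
Qed.

Lemma derive_Nv_le t : 0 < t -> derive_le (Nv x) t (bv - muv * Nv x t).
Proof. intros ht. exists (bv - muv * Nv x t). split; [apply derive_Nv, ht|lra]. Qed.

Lemma derive_Nv_ge t : 0 < t -> derive_ge (Nv x) t (bv - muv * Nv x t).
Proof. intros ht. exists (bv - muv * Nv x t). split; [apply derive_Nv, ht|lra]. Qed.

Lemma Nv_between t : 0 <= t -> Rmin (Nv x 0) V <= Nv x t <= Rmax (Nv x 0) V.
Proof.
  intros ht. assert (Hc := cont_Nv 0 ltac:(lra)). split.
  - exact (linear_lower_bound_min 0 (Nv x) bv muv hmuv Hc derive_Nv_ge t ht).
  - exact (linear_upper_bound_max 0 (Nv x) bv muv hmuv Hc derive_Nv_le t ht).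
Qed.

Lemma Nv_lower : exists m, 0 < m /\ forall t, 0 <= t -> m <= Nv x t.
Proof.
  exists (Rmin (Nv x 0) V). split.
  - apply Rmin_pos; [apply solution_initial; lra|apply Rdiv_lt_0_compat; lra].
  - intros t ht. apply Nv_between, ht.
Qed.

Lemma Nv_pos t : - tau <= t -> 0 < Nv x t.
Proof.
  intros ht. destruct (Rlt_le_dec t 0) as [hneg|hpos].
  - apply solution_initial. lra.
  - destruct Nv_lower as (m & hm & Hm). specialize (Hm t hpos). lra.
Qed.

Lemma Nv_eventually_near eta : 0 < eta -> at_infty (fun t => V - eta <= Nv x t <= V + eta).
Proof.
  intros heta. assert (Hc := cont_Nv _ (Rle_refl (- tau))). apply filter_and.
  - apply (eventually_ge_of_derive_ge _ _ _ _ hmuv Hc); [exists 0; exact derive_Nv_ge|exact heta].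
  - apply (eventually_le_of_derive_le _ _ _ _ hmuv Hc); [exists 0; exact derive_Nv_le|exact heta].
Qed.

(* [L] does not depend on [e]: the lower bound [- e] only enters through products with
   quantities bounded by [K]. *)
Lemma derive_at_lower_touch K m e s :
  0 <= K -> 0 < m -> 0 < e -> 0 < s ->
  (forall u, 0 <= u <= s -> m <= Nv x u /\
     - K <= Sh x u <= K /\ - K <= Ih x u <= K /\ - K <= Sv x u <= K /\ - K <= Iv x u <= K /\
     - e <= Sh x u /\ - e <= Ih x u /\ - e <= Sv x u /\ - e <= Iv x u) ->
  forall g, In g [Sh x; Ih x; Sv x; Iv x] -> g s = - e ->
  exists d, is_derive g s d /\ - ((Cvh * (K / m) + Chv * K) * e) < d.
Proof.
  intros hK hm he hs Hb g Hg hgs.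
  destruct (Hb s ltac:(lra)) as (hN & b1 & b2 & b3 & b4 & l1 & l2 & l3 & l4).
  assert (hKm : 0 <= K / m) by (apply Rdiv_le_0_compat; lra).
  assert (0 <= Cvh * (K / m) * e) by (apply Rmult_le_pos; [apply Rmult_le_pos|]; lra).
  assert (0 <= Chv * K * e) by (apply Rmult_le_pos; [apply Rmult_le_pos|]; lra).
  assert (ratio : - (K / m) <= Iv x s / Nv x s) by (apply ratio_ge_neg; lra).
  assert (delayed : - (K * e / m) <= Iv x (s - tau) / Nv x (s - tau) * Sh x (s - tau)).
  { destruct (Rlt_le_dec (s - tau) 0) as [hd|hd].
    - destruct (solution_initial (s - tau)) as (i1 & _ & _ & i4 & i5); [lra|].
      assert (0 <= K * e / m) by (apply Rdiv_le_0_compat; nra).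
      assert (0 <= Iv x (s - tau) / Nv x (s - tau)) by (apply Rdiv_le_0_compat; lra).
      nra.
    - destruct (Hb (s - tau) ltac:(lra)) as (hN' & c1 & _ & _ & c4 & d1 & _ & _ & d4).
      replace (Iv x (s - tau) / Nv x (s - tau) * Sh x (s - tau))
        with (Iv x (s - tau) * Sh x (s - tau) / Nv x (s - tau)) by (field; lra).
      apply ratio_ge_neg; [apply mult_ge_neg; lra|nra|lra]. }
  simpl in Hg. destruct Hg as [<-|[<-|[<-|[<-|[]]]]]; eexists.
  - split; [apply derive_Sh; lra|]. rewrite hgs.
    assert (Cvh * (- (K / m)) * e <= Cvh * (Iv x s / Nv x s) * e)
      by (apply Rmult_le_compat_r; [lra|]; apply Rmult_le_compat_l; lra).
    nra.
  - split; [apply derive_Ih; lra|]. rewrite hgs.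
    assert (Cvh * (- (K * e / m)) <= Cvh * (Iv x (s - tau) / Nv x (s - tau) * Sh x (s - tau)))
      by (apply Rmult_le_compat_l; lra).
    replace (K * e / m) with (K / m * e) in * by (field; lra). nra.
  - split; [apply derive_Sv; lra|]. rewrite hgs.
    assert (Chv * (- K * e) <= Chv * (Ih x s * e))
      by (apply Rmult_le_compat_l; [lra|]; apply Rmult_le_compat_r; lra).
    nra.
  - split; [apply derive_Iv; lra|]. rewrite hgs.
    assert (Chv * (- (K * e)) <= Chv * (Ih x s * Sv x s))
      by (apply Rmult_le_compat_l; [lra|]; apply mult_ge_neg; lra).
    nra.
Qed.

Lemma solution_nonneg t :
  - tau <= t -> 0 <= Sh x t /\ 0 <= Ih x t /\ 0 <= Sv x t /\ 0 <= Iv x t.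
Proof.
  intros ht. destruct (Rlt_le_dec t 0) as [hneg|hpos].
  { destruct (solution_initial t) as (? & ? & ? & ? & _); [lra|]. tauto. }
  destruct (cont_on_from_bounded 0 t (Sh x) (cont_Sh 0 ltac:(lra))) as (K1 & hK1 & B1).
  destruct (cont_on_from_bounded 0 t (Ih x) (cont_Ih 0 ltac:(lra))) as (K2 & hK2 & B2).
  destruct (cont_on_from_bounded 0 t (Sv x) (cont_Sv 0 ltac:(lra))) as (K3 & hK3 & B3).
  destruct (cont_on_from_bounded 0 t (Iv x) (cont_Iv 0 ltac:(lra))) as (K4 & hK4 & B4).
  set (K := K1 + K2 + K3 + K4).
  assert (hK : 0 <= K) by (unfold K; lra).
  assert (bounded : forall u, 0 <= u <= t ->
    - K <= Sh x u <= K /\ - K <= Ih x u <= K /\ - K <= Sv x u <= K /\ - K <= Iv x u <= K).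
  { intros u hu.
    specialize (B1 u hu). specialize (B2 u hu). specialize (B3 u hu). specialize (B4 u hu).
    apply Rabs_le_between in B1, B2, B3, B4. unfold K. repeat split; lra. }
  destruct Nv_lower as (m & hm & Hm).
  assert (hL : 0 <= Cvh * (K / m) + Chv * K).
  { assert (0 <= K / m) by (apply Rdiv_le_0_compat; lra).
    apply Rplus_le_le_0_compat; apply Rmult_le_pos; lra. }
  assert (H : forall g u, In g [Sh x; Ih x; Sv x; Iv x] -> 0 <= u <= t -> 0 <= g u).
  2: { repeat split; apply (H _ t); simpl; auto; lra. }
  apply (nonneg_barrier 0 t _ _ hL).
  - intros g Hg. simpl in Hg. destruct Hg as [<-|[<-|[<-|[<-|[]]]]];
      [apply cont_Sh|apply cont_Ih|apply cont_Sv|apply cont_Iv]; lra.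
  - intros g Hg. destruct (solution_initial 0) as (? & ? & ? & ? & _); [lra|].
    simpl in Hg. destruct Hg as [<-|[<-|[<-|[<-|[]]]]]; assumption.
  - intros s e hs he Hlow. apply derive_at_lower_touch; [lra..|].
    intros u hu. destruct (bounded u ltac:(lra)) as (b1 & b2 & b3 & b4).
    repeat split; try apply Hm; try apply (Hlow _ u); simpl; auto; lra.
Qed.

Lemma Iv_ratio_nonneg t : - tau <= t -> 0 <= Iv x t / Nv x t.
Proof.
  intros ht. apply Rdiv_le_0_compat; [apply solution_nonneg, ht|apply Nv_pos, ht].
Qed.

Lemma derive_Sh_le t : 0 < t -> derive_le (Sh x) t (bh - muh * Sh x t).
Proof.
  intros ht. eexists. split; [apply derive_Sh, ht|].
  assert (0 <= Cvh * (Iv x t / Nv x t) * Sh x t); [|lra].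
  apply Rmult_le_pos; [apply Rmult_le_pos; [lra|apply Iv_ratio_nonneg; lra]|].
  apply solution_nonneg. lra.
Qed.

Lemma derive_Sh_ge c t : 0 < t -> Iv x t <= c * Nv x t ->
  derive_ge (Sh x) t (bh - (muh + Cvh * c) * Sh x t).
Proof.
  intros ht hc. eexists. split; [apply derive_Sh, ht|].
  assert (hN := Nv_pos t ltac:(lra)).
  assert (Iv x t / Nv x t <= c) by (apply ratio_le; lra).
  assert (0 <= Sh x t) by (apply solution_nonneg; lra).
  assert (Cvh * (Iv x t / Nv x t) * Sh x t <= Cvh * c * Sh x t)
    by (apply Rmult_le_compat_r; [lra|]; apply Rmult_le_compat_l; lra).
  lra.
Qed.

Lemma derive_Ih_le c S t : 0 < t ->
  Iv x (t - tau) <= c * Nv x (t - tau) -> Sh x (t - tau) <= S ->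
  derive_le (Ih x) t (Cvh * c * S - muh * Ih x t).
Proof.
  intros ht hc hS. eexists. split; [apply derive_Ih, ht|].
  assert (hr : Iv x (t - tau) / Nv x (t - tau) <= c) by (apply ratio_le; [apply Nv_pos|]; lra).
  assert (0 <= Iv x (t - tau) / Nv x (t - tau)) by (apply Iv_ratio_nonneg; lra).
  assert (0 <= Sh x (t - tau)) by (apply solution_nonneg; lra).
  assert (Iv x (t - tau) / Nv x (t - tau) * Sh x (t - tau) <= c * S)
    by (apply Rmult_le_compat; lra).
  assert (Cvh * (Iv x (t - tau) / Nv x (t - tau) * Sh x (t - tau)) <= Cvh * (c * S))
    by (apply Rmult_le_compat_l; lra).
  lra.
Qed.

Lemma derive_Iv_le U W t : 0 < t -> Ih x t <= U -> Nv x t <= W ->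
  derive_le (Iv x) t (Chv * U * W - (Chv * U + muv) * Iv x t).
Proof.
  intros ht hU hW. eexists. split; [apply derive_Iv, ht|].
  destruct (solution_nonneg t) as (_ & hI & hS & _); [lra|]. unfold Nv in hW.
  assert (Chv * Ih x t * Sv x t <= Chv * U * (W - Iv x t)); [|lra].
  apply Rmult_le_compat; [nra|lra|apply Rmult_le_compat_l; lra|lra].
Qed.

Lemma Sh_le_max t : 0 <= t -> Sh x t <= Rmax (Sh x 0) A.
Proof.
  apply (linear_upper_bound_max 0 (Sh x) bh muh hmuh (cont_Sh 0 ltac:(lra))).
  apply derive_Sh_le.
Qed.

Lemma Sh_eventually_le eta : 0 < eta -> at_infty (fun t => Sh x t <= A + eta).
Proof.
  apply (eventually_le_of_derive_le (- tau) (Sh x) bh muh hmuh (cont_Sh _ (Rle_refl _))).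
  exists 0. apply derive_Sh_le.
Qed.

Lemma Sh_ge_min c : (forall t, 0 <= t -> Iv x t <= c * Nv x t) ->
  forall t, 0 <= t -> Rmin (Sh x 0) (bh / (muh + Cvh * c)) <= Sh x t.
Proof.
  intros Hc.
  assert (hc : 0 <= c).
  { specialize (Hc 0 (Rle_refl 0)). pose proof (Nv_pos 0 ltac:(lra)).
    pose proof (solution_nonneg 0 ltac:(lra)). nra. }
  apply (linear_lower_bound_min 0 (Sh x) bh (muh + Cvh * c)); [nra|apply cont_Sh; lra|].
  intros t ht. apply derive_Sh_ge; [exact ht|apply Hc; lra].
Qed.

Definition ratio_bound (u : R) : Prop := at_infty (fun t => Iv x t <= u * Nv x t).

Section Attractivity.

Hypothesis hR0 : Cvh * Chv * bh <= muh ^ 2 * muv.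

Lemma ratio_bound_improve u u' :
  0 <= u -> u / (1 + u) < u' -> ratio_bound u -> ratio_bound u'.
Proof.
  intros hu hu' Hu.
  destruct (ratio_improve_margin u u' hR0 hu hu') as (d & U & hd & hUdef & hU & hmargin).
  assert (hu'0 : 0 < u') by (assert (0 <= u / (1 + u)) by (apply Rdiv_le_0_compat; lra); lra).
  assert (Ih_le : at_infty (fun t => Ih x t <= U)).
  { rewrite hUdef. apply (eventually_le_of_derive_le (- tau) (Ih x) (Cvh * u * (A + d)) muh hmuh
                            (cont_Ih _ (Rle_refl _))); [|lra].
    generalize (filter_and _ _ (eventually_gt 0)
                  (eventually_shift tau _ (filter_and _ _ Hu (Sh_eventually_le d ltac:(lra))))).
    apply filter_imp. intros t (ht & hr & hS). apply derive_Ih_le; assumption. }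
  assert (Iv_le : at_infty (fun t => Iv x t <= Chv * U * (V + d) / (Chv * U + muv) + d)).
  { apply (eventually_le_of_derive_le (- tau) (Iv x) (Chv * U * (V + d)) (Chv * U + muv)
             ltac:(nra) (cont_Iv _ (Rle_refl _))); [|lra].
    generalize (filter_and _ _ (eventually_gt 0)
                  (filter_and _ _ Ih_le (Nv_eventually_near d ltac:(lra)))).
    apply filter_imp. intros t (ht & hI & hN). apply derive_Iv_le; [exact ht|exact hI|lra]. }
  unfold ratio_bound. generalize (filter_and _ _ Iv_le (Nv_eventually_near d ltac:(lra))).
  apply filter_imp. intros t (hI & hN).
  assert (u' * (V - d) <= u' * Nv x t) by (apply Rmult_le_compat_l; lra).
  lra.
Qed.

Lemma ratio_bound_all eta : 0 < eta -> ratio_bound eta.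
Proof.
  intros heta.
  assert (Hn : forall n, ratio_bound (2 / (INR n + 2))).
  { induction n as [|n IH].
    - simpl. replace (2 / (0 + 2)) with 1 by field. exists 0. intros t ht.
      destruct (solution_nonneg t) as (_ & _ & hS & _); [lra|]. unfold Nv. lra.
    - apply (ratio_bound_improve (2 / (INR n + 2))); [| |exact IH];
        pose proof (pos_INR n).
      + apply Rdiv_le_0_compat; lra.
      + rewrite S_INR. replace (2 / (INR n + 2) / (1 + 2 / (INR n + 2))) with (2 / (INR n + 4))
          by (field; lra).
        apply Rmult_lt_compat_l; [lra|]. apply Rinv_lt_contravar; nra. }
  destruct (archimed_cor1 (eta / 2) ltac:(lra)) as (n & hn & hn0).
  apply lt_0_INR in hn0.
  assert (hlt : 2 / (INR n + 2) < eta).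
  { assert (2 / (INR n + 2) < 2 / INR n)
      by (apply Rmult_lt_compat_l; [lra|]; apply Rinv_lt_contravar; nra).
    unfold Rdiv in *. lra. }
  unfold ratio_bound. generalize (filter_and _ _ (eventually_gt 0) (Hn n)).
  apply filter_imp. intros t (ht & hr).
  pose proof (Nv_pos t ltac:(lra)). nra.
Qed.

Lemma Iv_converges : is_lim (Iv x) p_infty 0.
Proof.
  apply (is_lim_of_eventual_bounds _ _ (fun _ => 0) (fun eta => eta * (V + eta)));
    [reg|reg|reflexivity|ring|].
  intros eta heta.
  generalize (filter_and _ _ (eventually_gt 0)
                (filter_and _ _ (ratio_bound_all eta heta) (Nv_eventually_near eta heta))).
  apply filter_imp. intros t (ht & hr & hN). split; [apply solution_nonneg; lra|].
  assert (eta * Nv x t <= eta * (V + eta)) by (apply Rmult_le_compat_l; lra). lra.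
Qed.

Lemma Sv_converges : is_lim (Sv x) p_infty V.
Proof.
  apply (is_lim_of_eventual_bounds _ _ (fun eta => V - eta - eta * (V + eta)) (fun eta => V + eta));
    [reg|reg|ring|ring|].
  intros eta heta.
  generalize (filter_and _ _ (eventually_gt 0)
                (filter_and _ _ (ratio_bound_all eta heta) (Nv_eventually_near eta heta))).
  apply filter_imp. intros t (ht & hr & hN).
  destruct (solution_nonneg t) as (_ & _ & _ & hI); [lra|].
  assert (eta * Nv x t <= eta * (V + eta)) by (apply Rmult_le_compat_l; lra).
  unfold Nv in *. split; lra.
Qed.

Lemma Ih_converges : is_lim (Ih x) p_infty 0.
Proof.
  apply (is_lim_of_eventual_bounds _ _ (fun _ => 0) (fun eta => Cvh * eta * (A + eta) / muh + eta));
    [reg|reg; lra|reflexivity|field; lra|].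
  intros eta heta.
  assert (Hd : at_infty (fun t => derive_le (Ih x) t (Cvh * eta * (A + eta) - muh * Ih x t))).
  { generalize (filter_and _ _ (eventually_gt 0)
                  (eventually_shift tau _ (filter_and _ _ (ratio_bound_all eta heta)
                                                          (Sh_eventually_le eta heta)))).
    apply filter_imp. intros t (ht & hr & hS). apply derive_Ih_le; assumption. }
  generalize (filter_and _ _ (eventually_gt 0)
                (eventually_le_of_derive_le (- tau) (Ih x) _ muh hmuh (cont_Ih _ (Rle_refl _))
                   Hd eta heta)).
  apply filter_imp. intros t (ht & hI). split; [apply solution_nonneg; lra|exact hI].
Qed.

Lemma Sh_converges : is_lim (Sh x) p_infty A.
Proof.
  apply (is_lim_of_eventual_bounds _ _ (fun eta => bh / (muh + Cvh * eta) - eta)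
                                       (fun eta => A + eta));
    [reg; lra|reg|field; lra|ring|].
  intros eta heta.
  assert (Hd : at_infty (fun t => derive_ge (Sh x) t (bh - (muh + Cvh * eta) * Sh x t))).
  { generalize (filter_and _ _ (eventually_gt 0) (ratio_bound_all eta heta)).
    apply filter_imp. intros t (ht & hr). apply derive_Sh_ge; assumption. }
  generalize (filter_and _ _ (Sh_eventually_le eta heta)
                (eventually_ge_of_derive_ge (- tau) (Sh x) bh (muh + Cvh * eta) ltac:(nra)
                   (cont_Sh _ (Rle_refl _)) Hd eta heta)).
  apply filter_imp. intros t (hu & hl). split; assumption.
Qed.

End Attractivity.

Lemma derive_box_Ih b k S s :
  0 < s -> 0 < k -> Cvh * b * S < muh ->
  Iv x (s - tau) <= b * k * Nv x (s - tau) -> Sh x (s - tau) <= S -> Ih x s = k ->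
  exists d, is_derive (fun u => k - Ih x u) s d /\ 0 < d.
Proof.
  intros hs hk hS hI hSh hIh.
  destruct (derive_Ih_le (b * k) S s hs hI hSh) as (d & Hd & hd).
  exists (0 - d). split.
  - exact (is_derive_minus (fun _ => k) (Ih x) s 0 d
             (@is_derive_const R_AbsRing R_NormedModule k s) Hd).
  - rewrite hIh in hd. nra.
Qed.

Lemma derive_box_Iv b k W s :
  0 < s -> 0 < k -> Chv * W < b * bv ->
  Ih x s <= k -> Nv x s <= W -> Iv x s = b * k * Nv x s ->
  exists d, is_derive (fun u => b * k * Nv x u - Iv x u) s d /\ 0 < d.
Proof.
  intros hs hk hW hIh hN hIv.
  destruct (derive_Iv_le k W s hs hIh hN) as (d & Hd & hd).
  exists (b * k * (bv - muv * Nv x s) - d). split.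
  - exact (is_derive_minus (fun u => b * k * Nv x u) (Iv x) s _ d
             (is_derive_scal (Nv x) s (b * k) _ (derive_Nv s hs)) Hd).
  - destruct (solution_nonneg s) as (_ & _ & _ & hI); [lra|].
    assert (E : b * k * (bv - muv * Nv x s) = b * k * bv - muv * Iv x s) by (rewrite hIv; ring).
    assert (0 < k * (b * bv - Chv * W)) by (apply Rmult_lt_0_compat; lra).
    assert (0 <= Chv * k * Iv x s) by (apply Rmult_le_pos; [apply Rmult_le_pos|]; lra).
    rewrite E. nra.
Qed.

Lemma box_invariant b k S W :
  0 < k -> Cvh * b * S < muh -> Chv * W < b * bv ->
  (forall t, - tau <= t -> Sh x t <= S) -> (forall t, 0 <= t -> Nv x t <= W) ->
  (forall th, - tau <= th <= 0 -> Ih x th < k /\ Iv x th < b * k * Nv x th) ->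
  forall t, 0 <= t -> Ih x t < k /\ Iv x t < b * k * Nv x t.
Proof.
  intros hk hS hW HS HW Hinit t ht.
  set (gs := [fun u => k - Ih x u; fun u => b * k * Nv x u - Iv x u]).
  assert (H : forall g u, In g gs -> 0 <= u <= t -> 0 < g u).
  2: { assert (0 < k - Ih x t) by (apply (H (fun u => k - Ih x u)); simpl; auto; lra).
       assert (0 < b * k * Nv x t - Iv x t)
         by (apply (H (fun u => b * k * Nv x u - Iv x u)); simpl; auto; lra).
       split; lra. }
  apply (positive_barrier 0 t).
  - intros g Hg. simpl in Hg. destruct Hg as [<-|[<-|[]]]; apply cont_on_from_minus.
    + apply cont_on_from_const.
    + apply cont_Ih. lra.
    + apply cont_on_from_mult; [apply cont_on_from_const|apply cont_Nv; lra].
    + apply cont_Iv. lra.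
  - intros g Hg. destruct (Hinit 0) as [h1 h2]; [lra|].
    simpl in Hg. destruct Hg as [<-|[<-|[]]]; lra.
  - intros s hs Hnn g Hg hz.
    assert (inbox : forall u, - tau <= u <= s -> Ih x u <= k /\ Iv x u <= b * k * Nv x u).
    { intros u hu. destruct (Rlt_le_dec u 0) as [hu0|hu0].
      - destruct (Hinit u) as [h1 h2]; [lra|]. lra.
      - pose proof (Hnn (fun u => k - Ih x u) u ltac:(simpl; auto) ltac:(lra)).
        pose proof (Hnn (fun u => b * k * Nv x u - Iv x u) u ltac:(simpl; auto) ltac:(lra)).
        simpl in *. lra. }
    simpl in Hg. destruct Hg as [<-|[<-|[]]].
    + apply (derive_box_Ih b k S); try lra.
      * apply inbox. lra.
      * apply HS. lra.
    + apply (derive_box_Iv b k W); try lra.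
      * apply inbox. lra.
      * apply HW. lra.
Qed.

(* One term per component while [I_h < k] and [I_v < b k N_v]; the last one bounds
   [A - beta_h / (mu_h + C_vh b k)], the loss in [S_h]. *)
Definition deviation (b k delta : R) : R :=
  3 * delta + k + 2 * b * k * (V + 2 * delta) + A * (Cvh * (b * k)) / muh.

Lemma solution_deviation b k delta :
  0 < delta -> delta <= V / 4 -> delta <= k -> delta <= b * k * (V / 2) ->
  Chv * (V + 2 * delta) < b * bv -> Cvh * b * (A + delta) < muh ->
  (forall th, - tau <= th <= 0 -> close_at phi A 0 V 0 delta th) ->
  forall t, - tau <= t -> close_at x A 0 V 0 (deviation b k delta) t.
Proof.
  intros hd hdV hdk hdb hW hS Hclose t ht.
  assert (hV : 0 < V) by (apply Rdiv_lt_0_compat; lra).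
  assert (hA : 0 < A) by (apply Rdiv_lt_0_compat; lra).
  assert (hbk : 0 < b * k) by nra.
  assert (hc : 0 <= A * (Cvh * (b * k)) / muh)
    by (apply Rdiv_le_0_compat; [apply Rmult_le_pos; nra|lra]).
  assert (init : forall th, - tau <= th <= 0 ->
    A - delta < Sh x th < A + delta /\ - delta < Ih x th < delta /\
    V - delta < Sv x th < V + delta /\ - delta < Iv x th < delta).
  { intros th hth. destruct (Hclose th hth) as (c1 & c2 & c3 & c4).
    destruct Hsol as [Hinit _]. destruct (Hinit th hth) as (e1 & e2 & e3 & e4).
    rewrite <- e1 in c1. rewrite <- e2 in c2. rewrite <- e3 in c3. rewrite <- e4 in c4.
    apply Rabs_def2 in c1, c2, c3, c4. rewrite Rminus_0_r in c2, c4. repeat split; lra. }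
  destruct (init 0) as (i1 & i2 & i3 & i4); [lra|].
  assert (Nv_near : forall u, 0 <= u -> V - 2 * delta < Nv x u < V + 2 * delta).
  { intros u hu. pose proof (Nv_between u hu). unfold Nv in *.
    unfold Rmin, Rmax in *. destruct Rle_dec; lra. }
  assert (Sh_up : forall u, - tau <= u -> Sh x u <= A + delta).
  { intros u hu. destruct (Rlt_le_dec u 0) as [hu0|hu0].
    - destruct (init u) as (j & _); lra.
    - pose proof (Sh_le_max u hu0). unfold Rmax in *. destruct Rle_dec; lra. }
  assert (box := box_invariant b k (A + delta) (V + 2 * delta) ltac:(lra) hS hW Sh_up).
  specialize (box ltac:(intros u hu; left; apply Nv_near, hu)).
  specialize (box ltac:(intros th hth; destruct (init th hth) as (_ & j2 & j3 & j4);
     assert (b * k * (V / 2) <= b * k * Nv x th) by (apply Rmult_le_compat_l; unfold Nv; lra);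
     split; lra)).
  destruct (Rlt_le_dec t 0) as [ht0|ht0].
  { destruct (init t) as (j1 & j2 & j3 & j4); [lra|].
    unfold close_at, deviation. rewrite !Rminus_0_r. repeat split; apply Rabs_def1; nra. }
  assert (Sh_lo := Sh_ge_min (b * k) (fun u hu => Rlt_le _ _ (proj2 (box u hu))) t ht0).
  assert (Sh_floor : A - A * (Cvh * (b * k)) / muh <= bh / (muh + Cvh * (b * k)))
    by (apply div_add_ge_first_order; nra).
  destruct (box t ht0) as [hIh hIv]. destruct (solution_nonneg t) as (_ & hI1 & _ & hI2); [lra|].
  destruct (Nv_near t ht0) as [hN1 hN2]. pose proof (Sh_up t ht).
  assert (b * k * Nv x t <= b * k * (V + 2 * delta)) by (apply Rmult_le_compat_l; lra).
  unfold close_at, deviation. unfold Nv in *. rewrite !Rminus_0_r.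
  unfold Rmin in Sh_lo. destruct Rle_dec in Sh_lo; repeat split; apply Rabs_def1; nra.
Qed.

End Solution.

Lemma glob_attractive_E0 :
  Cvh * Chv * bh <= muh ^ 2 * muv -> glob_attractive bh bv muh muv Cvh Chv tau A 0 V 0.
Proof.
  intros hR0 phi x Hphi Hsol.
  repeat split; [eapply Sh_converges|eapply Ih_converges|eapply Sv_converges|eapply Iv_converges];
    eassumption.
Qed.

(* The admissible slopes form the interval (C_hv/mu_v, mu_h/(C_vh A)), which is nonempty
   exactly when [R0 < 1]. *)
Lemma stability_slope :
  Cvh * Chv * bh < muh ^ 2 * muv -> exists b, Chv * V < b * bv /\ Cvh * b * A < muh.
Proof.
  intros hR0.
  assert (hA : 0 < A) by (apply Rdiv_lt_0_compat; lra).
  assert (hCA : 0 < Cvh * A) by nra.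
  assert (hgap : Chv / muv < muh / (Cvh * A)).
  { replace (muh / (Cvh * A)) with (muh ^ 2 / (Cvh * bh)) by (field; lra).
    assert (hCb : 0 < Cvh * bh) by nra.
    apply (Rmult_lt_reg_r (muv * (Cvh * bh))); [nra|].
    replace (Chv / muv * (muv * (Cvh * bh))) with (Cvh * Chv * bh) by (field; lra).
    replace (muh ^ 2 / (Cvh * bh) * (muv * (Cvh * bh))) with (muh ^ 2 * muv) by (field; lra).
    exact hR0. }
  set (b := (Chv / muv + muh / (Cvh * A)) / 2).
  exists b. split.
  - replace (Chv * V) with (Chv / muv * bv) by (field; lra).
    apply Rmult_lt_compat_r; [lra|]. unfold b. lra.
  - replace muh with (muh / (Cvh * A) * (Cvh * A)) at 2 by (field; lra).
    replace (Cvh * b * A) with (b * (Cvh * A)) by ring.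
    apply Rmult_lt_compat_r; [lra|]. unfold b. lra.
Qed.

Lemma lyap_stable_E0 :
  Cvh * Chv * bh < muh ^ 2 * muv -> lyap_stable bh bv muh muv Cvh Chv tau A 0 V 0.
Proof.
  intros hR0 eps heps.
  assert (hV : 0 < V) by (apply Rdiv_lt_0_compat; lra).
  destruct (stability_slope hR0) as (b & hbV & hbA).
  assert (hb : 0 < b) by (assert (0 < Chv * V) by nra; nra).
  set (k := fun delta => delta * (1 + 2 / (b * V))).
  assert (h2bV : 0 < 2 / (b * V)) by (apply Rdiv_lt_0_compat; nra).
  destruct (continuity_pt_right_lt (fun delta => deviation b (k delta) delta) eps)
    as (d1 & hd1 & Hd1).
  { unfold deviation, k. reg. }
  { unfold deviation, k, Rdiv. ring_simplify. exact heps. }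
  destruct (continuity_pt_right_lt (fun delta => Chv * (V + 2 * delta)) (b * bv))
    as (d2 & hd2 & Hd2); [reg|simpl; lra|].
  destruct (continuity_pt_right_lt (fun delta => Cvh * b * (A + delta)) muh)
    as (d3 & hd3 & Hd3); [reg|simpl; lra|].
  set (delta := Rmin (Rmin d1 d2) (Rmin d3 (V / 4))).
  assert (hdelta : 0 < delta) by (repeat apply Rmin_pos; lra).
  assert (hdelta1 : delta <= d1 /\ delta <= d2 /\ delta <= d3 /\ delta <= V / 4).
  { unfold delta. pose proof (Rmin_l (Rmin d1 d2) (Rmin d3 (V / 4))).
    pose proof (Rmin_r (Rmin d1 d2) (Rmin d3 (V / 4))).
    pose proof (Rmin_l d1 d2). pose proof (Rmin_r d1 d2). pose proof (Rmin_l d3 (V / 4)).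
    pose proof (Rmin_r d3 (V / 4)). lra. }
  exists delta. split; [exact hdelta|]. intros phi x Hphi Hclose Hsol t ht.
  apply (close_at_mono _ _ _ _ _ (deviation b (k delta) delta)); [left; apply Hd1; lra|].
  apply (solution_deviation phi x Hphi Hsol); try lra.
  - unfold k. nra.
  - unfold k. replace (b * (delta * (1 + 2 / (b * V))) * (V / 2)) with (delta * (b * V / 2 + 1))
      by (field; split; lra).
    assert (0 < b * V) by nra. nra.
  - apply Hd2. lra.
  - apply Hd3. lra.
  - exact Hclose.
Qed.

End Model.

Theorem theorem5 (bh bv muh muv Cvh Chv tau : R)
  (hbh : 0 < bh) (hbv : 0 < bv) (hmuh : 0 < muh) (hmuv : 0 < muv)
  (hCvh : 0 < Cvh) (hChv : 0 < Chv) (htau : 0 <= tau) :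
  let R0 := sqrt (Cvh * Chv * bh / (muh ^ 2 * muv)) in
  (R0 < 1 -> glob_asym_stable bh bv muh muv Cvh Chv tau (bh / muh) 0 (bv / muv) 0) /\
  (R0 = 1 -> glob_attractive bh bv muh muv Cvh Chv tau (bh / muh) 0 (bv / muv) 0).
Proof.
  intros R0.
  assert (hp : 0 <= Cvh * Chv * bh) by (apply Rmult_le_pos; [apply Rmult_le_pos|]; lra).
  assert (hq : 0 < muh ^ 2 * muv) by (apply Rmult_lt_0_compat; [apply pow_lt|]; lra).
  split; intros hR.
  - pose proof (sqrt_ratio_lt_1 _ _ hp hq hR).
    split; [apply lyap_stable_E0|apply glob_attractive_E0]; auto; lra.
  - pose proof (sqrt_ratio_eq_1 _ _ hp hq hR).
    apply glob_attractive_E0; auto; lra.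
Qed.
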